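(* Let $k=6$, $p\in\mathbb{S}^n$ ($n\ge2$), $R\in(0,\pi/2)$, $B_R=\{q:\mathbf{d}_p(q)\le R\}$, $y\in\partial B_R$, and $\gamma:[R,\pi]\to\mathbb{S}^n$ the unit-speed minimizing geodesic from $y$ to $-p$ with $\mathbf{d}_p(\gamma(s))=s$. Let $h,f_1,f_2$ be smooth functions on $(R,\pi)$. Then the identity \[-15\sin R\,\langle\Psi_{\gamma(s)},\nabla\mathbf{d}_p\rangle\big|_x\,h(s)-3\cos R\,h(s)=\frac{d}{ds}\sum_{i=1}^2\frac{f_i(s)\sin^4s}{(1-\cos\mathbf{d}_x(\gamma(s)))^i}\] holding for all $x\in\partial B_R\setminus\{y\}$ and $s\in(R,\pi)$ is equivalent to the conditions that $h(s)=f_2(s)\sin^3s$ and $\boldsymbol f=(f_1,f_2)$ solves the system $\boldsymbol f'=A\boldsymbol f$, where \[A=\frac{1}{\sin s}\begin{pmatrix}-3\cos s&3\cos s\\ \cos R-\cos s&\cos s-\cos R\end{pmatrix}.\]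
   Context: $\mathbb{S}^n$ is the unit round sphere with Levi-Civita connection $\nabla$; $\mathbf{d}_q$ is geodesic distance from $q$. With $k=6$: $I_k(r)=\int_0^r\sin^{k-1}s\,ds$, $\varphi(t)=I_k(t)\sin^{1-k}t$ for $t\in(0,\pi)$, $\varphi(0)=0$, $\Phi_q=(\varphi\circ\mathbf{d}_q)\nabla\mathbf{d}_q$ on $\mathbb{S}^n\setminus\{-q\}$, and $\Psi_q:=\Phi_{-q}$ on $\mathbb{S}^n\setminus\{q\}$. *)

(* R : realType; the round sphere S^n is the set of
   unit vectors of the Euclidean space 'rV[R]_(n.+1) with the induced metric. *)
From HB Require Import structures.
From mathcomp Require Import all_boot all_order all_algebra.
From mathcomp Require Import all_classical all_reals all_analysis.
Set Implicit Arguments. Unset Strict Implicit. Unset Printing Implicit Defensive.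
Import Order.TTheory GRing.Theory Num.Theory.
Import numFieldNormedType.Exports.
Local Open Scope classical_set_scope.
Local Open Scope ring_scope.

Section Sphere.
Variable R : realType.

Definition dotv (m : nat) (u v : 'rV[R]_m) : R := \sum_(i < m) u 0 i * v 0 i.

Definition on_sphere (n : nat) (x : 'rV[R]_n.+1) : Prop := dotv x x = 1.

Definition gdist (n : nat) (q x : 'rV[R]_n.+1) : R := acos (dotv q x).

(* Riemannian gradient of d_q at x: the tangential projection
   v - <v,x> x of the ambient gradient v = - q / sqrt(1 - <q,x>^2)
   of x |-> acos <q,x>.  (Only meaningful for x <> +-q.) *)
Definition grad_dist (n : nat) (q x : 'rV[R]_n.+1) : 'rV[R]_n.+1 :=
  let v := (- (Num.sqrt (1 - dotv q x ^+ 2))^-1) *: q in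
  v - dotv v x *: x.

Definition Ik (k : nat) (r : R) : R :=
  Rintegral (@lebesgue_measure R) `[0, r] (fun s => sin s ^+ k.-1).

Definition phik (k : nat) (t : R) : R :=
  if t == 0 then 0 else Ik k t / sin t ^+ k.-1.

(* Phi_q = (phi o d_q) grad d_q on S^n \ {-q}; at x = q it is 0 since phi(0)=0 *)
Definition Phi (k n : nat) (q x : 'rV[R]_n.+1) : 'rV[R]_n.+1 :=
  if x == q then 0 else phik k (gdist q x) *: grad_dist q x.

Definition Psi (k n : nat) (q x : 'rV[R]_n.+1) : 'rV[R]_n.+1 := Phi k (- q) x.

Definition smooth_on (a b : R) (f : R -> R) : Prop :=
  forall (j : nat) (t : R), a < t < b -> derivable (derive1n j f) t 1.

End Sphere.

From mathcomp Require Import all_boot all_order all_algebra.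
From mathcomp Require Import all_classical all_reals all_analysis.
From mathcomp Require Import lra ring zify.
Import Order.TTheory GRing.Theory Num.Theory.
Import numFieldNormedType.Exports.
Set Implicit Arguments. Unset Strict Implicit. Unset Printing Implicit Defensive.
Local Open Scope ring_scope.

(* For x on the boundary sphere of B_R, <x, gamma s> = cos R cos s + <x, e> sin s,
   where e is the unit tangent at p pointing towards y.  So both sides of the
   identity depend on x only through c = cos d_x(gamma s): the right-hand side is
   differentiated explicitly, and 15 I_6(t) = (1 - cos t)^3 (3 cos^2 t + 9 cos t + 8)
   makes the left-hand side a rational function of c too.  Their difference is
   sin^3 s / (1 - c)^3 times a quadratic polynomial in 1 - c whose coefficients are
   linear in h, f_i, f_i' at s and vanish exactly when h = f_2 sin^3 and f' = A f.
   Conversely, as n >= 2, the points x <> y of the boundary sphere realise every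
   value of <x, e> in [-sin R, sin R), hence at least three values of c, and a
   quadratic with three roots is zero. *)

Section DotProduct.
Variables (R : realType) (m : nat).
Implicit Types u v w : 'rV[R]_m.

Lemma dotvC u v : dotv u v = dotv v u.
Proof. by apply: eq_bigr => i _; rewrite mulrC. Qed.

Lemma dotvDl u v w : dotv (u + v) w = dotv u w + dotv v w.
Proof. by rewrite /dotv -big_split; apply: eq_bigr => i _; rewrite !mxE mulrDl. Qed.

Lemma dotvZl (k : R) u w : dotv (k *: u) w = k * dotv u w.
Proof. by rewrite /dotv mulr_sumr; apply: eq_bigr => i _; rewrite !mxE mulrA. Qed.

Lemma dotvNl u w : dotv (- u) w = - dotv u w.
Proof. by rewrite -scaleN1r dotvZl mulN1r. Qed.

Lemma dotvBl u v w : dotv (u - v) w = dotv u w - dotv v w.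
Proof. by rewrite dotvDl dotvNl. Qed.

Lemma dotvDr u v w : dotv w (u + v) = dotv w u + dotv w v.
Proof. by rewrite dotvC dotvDl !(dotvC w). Qed.

Lemma dotvZr (k : R) u w : dotv w (k *: u) = k * dotv w u.
Proof. by rewrite dotvC dotvZl dotvC. Qed.

Lemma dotvNr u w : dotv w (- u) = - dotv w u.
Proof. by rewrite dotvC dotvNl dotvC. Qed.

Lemma dotvBr u v w : dotv w (u - v) = dotv w u - dotv w v.
Proof. by rewrite dotvDr dotvNr. Qed.

Lemma dotv0l u : dotv 0 u = 0.
Proof. by rewrite -(scale0r 0) dotvZl mul0r. Qed.

Lemma dotvvE u : dotv u u = \sum_(i < m) u 0 i ^+ 2.
Proof. by apply: eq_bigr => i _; rewrite expr2. Qed.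

Lemma dotvv_ge0 u : 0 <= dotv u u.
Proof. by rewrite dotvvE; apply: sumr_ge0 => i _; rewrite sqr_ge0. Qed.

Lemma dotvv_eq0 u : (dotv u u == 0) = (u == 0).
Proof.
apply/idP/eqP => [|->]; last by rewrite dotvvE big1 // => i _; rewrite mxE expr0n.
rewrite dotvvE psumr_eq0 => [/allP u0|i _]; last exact: sqr_ge0.
apply/matrixP => i j; rewrite (ord1 i) mxE.
by apply/eqP; rewrite -sqrf_eq0; apply: u0; apply: mem_index_enum.
Qed.

Lemma dotv_mulmx u v : dotv u v = (u *m v^T) 0 0.
Proof. by rewrite mxE; apply: eq_bigr => i _; rewrite mxE. Qed.

End DotProduct.

Section UnitSphere.
Variables (R : realType) (n : nat).
Implicit Types u v w e f : 'rV[R]_n.+1.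

Lemma on_sphereN u : on_sphere u -> on_sphere (- u).
Proof. by rewrite /on_sphere dotvNl dotvNr opprK. Qed.

Lemma sphere_dotv_bound u v : on_sphere u -> on_sphere v -> -1 <= dotv u v <= 1.
Proof.
move=> hu hv; have := dotvv_ge0 (u - v); have := dotvv_ge0 (u + v).
rewrite !dotvBl !dotvDl !dotvBr !dotvDr hu hv (dotvC v u); lra.
Qed.

Lemma sphere_dotv_eq1 u v : on_sphere u -> on_sphere v -> dotv u v = 1 -> u = v.
Proof.
move=> hu hv huv; apply/eqP; rewrite -subr_eq0 -dotvv_eq0.
by rewrite !dotvBl !dotvBr hu hv (dotvC v u) huv; apply/eqP; lra.
Qed.

Lemma sphere_dotv_eqN1 u v : on_sphere u -> on_sphere v -> dotv u v = -1 -> u = - v.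
Proof.
move=> hu hv huv; apply/eqP; rewrite -subr_eq0 opprK -dotvv_eq0.
by rewrite !dotvDl !dotvDr hu hv (dotvC v u) huv; apply/eqP; lra.
Qed.

Lemma cos_gdist u v : on_sphere u -> on_sphere v -> cos (gdist u v) = dotv u v.
Proof. by move=> hu hv; rewrite acosK // in_itv; apply: sphere_dotv_bound. Qed.

Lemma sphere_orthonormal2 e f w : on_sphere e -> on_sphere f -> dotv e f = 0 ->
  on_sphere w -> dotv w e ^+ 2 + dotv w f ^+ 2 = 1 ->
  w = dotv w e *: e + dotv w f *: f.
Proof.
move=> he hf hef hw hsum; apply/eqP; rewrite -subr_eq0 -dotvv_eq0.
rewrite !(dotvBl, dotvBr, dotvDl, dotvDr, dotvZl, dotvZr) he hf hef hw.
by rewrite (dotvC e w) (dotvC f w) (dotvC f e) hef; apply/eqP; lra.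
Qed.

Lemma exists_sphere_orthogonal2 u v : (2 <= n)%N ->
  exists e, [/\ on_sphere e, dotv e u = 0 & dotv e v = 0].
Proof.
move=> n2; pose K := kermx (row_mx u^T v^T).
have : K != 0.
  by rewrite -mxrank_eq0 mxrank_ker; have := rank_leq_col (row_mx u^T v^T); lia.
case/matrix0Pn => i [j Kij]; pose w := row i K.
have w0 : w != 0 by apply/matrix0Pn; exists 0, j; rewrite mxE.
have : w *m row_mx u^T v^T = 0 by rewrite -row_mul mulmx_ker row0.
rewrite mul_mx_row => /eqP; rewrite row_mx_eq0 => /andP[/eqP wu /eqP wv].
have ww : 0 < dotv w w by rewrite lt_def dotvv_eq0 w0 dotvv_ge0.
exists ((Num.sqrt (dotv w w))^-1 *: w); split.
- rewrite /on_sphere dotvZl dotvZr mulrA -expr2 exprVn sqr_sqrtr ?ltW //.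
  by rewrite mulVf ?gt_eqF.
- by rewrite dotvZl (dotv_mulmx w u) wu mxE mulr0.
- by rewrite dotvZl (dotv_mulmx w v) wv mxE mulr0.
Qed.

Lemma exists_sphere_dotv2 p e (a b : R) : (2 <= n)%N ->
  on_sphere p -> on_sphere e -> dotv p e = 0 -> a ^+ 2 + b ^+ 2 <= 1 ->
  exists x, [/\ on_sphere x, dotv x p = a & dotv x e = b].
Proof.
move=> n2 hp he pe ab1; have [f [hf fp fe]] := exists_sphere_orthogonal2 p e n2.
set c := Num.sqrt (1 - (a ^+ 2 + b ^+ 2)).
have c2 : c ^+ 2 = 1 - (a ^+ 2 + b ^+ 2) by rewrite sqr_sqrtr // subr_ge0.
exists (a *: p + b *: e + c *: f).
rewrite /on_sphere !(dotvDl, dotvDr, dotvZl, dotvZr) hp he hf pe fp fe.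
rewrite (dotvC e p) (dotvC p f) (dotvC e f) pe fp fe.
split; [| ring | ring].
by transitivity (a ^+ 2 + b ^+ 2 + c ^+ 2); [ring | rewrite c2; ring].
Qed.

End UnitSphere.

Section SinPower.
Variable R : realType.

Definition sin5_primitive (t : R) : R := - cos t + 2/3 * cos t ^+ 3 - 1/5 * cos t ^+ 5.

Lemma is_derive_sin5_primitive (x : R) : is_derive x 1 sin5_primitive (sin x ^+ 5).
Proof.
have -> : sin5_primitive = - cos + (2/3) *: cos ^+ 3 - (1/5) *: cos ^+ 5 :> (R -> R).
  by apply/funext => t; rewrite /sin5_primitive /= !exprfctE.
apply: is_derive_eq; rewrite /GRing.scale /=.
have -> : cos x ^+ 4 = (cos x ^+ 2) ^+ 2 by rewrite -exprM.
by rewrite cos2sin2; field.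
Qed.

Lemma continuous_sin5_primitive : continuous sin5_primitive.
Proof.
move=> x; apply/differentiable_continuous/derivable1_diffP.
by case: (is_derive_sin5_primitive x).
Qed.

Lemma Ik6E (t : R) : 0 < t ->
  15 * Ik 6 t = (1 - cos t) ^+ 3 * (3 * cos t ^+ 2 + 9 * cos t + 8).
Proof.
move=> t0; rewrite /Ik /Rintegral (continuous_FTC2 (F := sin5_primitive) t0) /=.
- by rewrite /sin5_primitive cos0; field.
- apply: continuous_subspaceT => x.
  exact: (continuous_comp (@continuous_sin R x) (@exprn_continuous R 5 (sin x))).
- split; first by move=> x _; case: (is_derive_sin5_primitive x).
  + exact: cvg_at_right_filter (@continuous_sin5_primitive 0).
  + exact: cvg_at_left_filter (@continuous_sin5_primitive t).
- by move=> x _; rewrite derive1E; case: (is_derive_sin5_primitive x).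
Qed.
End SinPower.

Lemma quadratic_coefs_eq0 (R : idomainType) (q0 q1 q2 : R) (xs : seq R) :
  uniq xs -> (2 < size xs)%N ->
  (forall x, x \in xs -> q2 * x ^+ 2 + q1 * x + q0 = 0) ->
  [/\ q0 = 0, q1 = 0 & q2 = 0].
Proof.
move=> xs_uniq xs_size xs_roots; pose P := Poly [:: q0; q1; q2].
have P_roots : all (root P) xs.
  apply/allP => x /xs_roots; rewrite /root horner_Poly /= mul0r add0r => <-.
  by rewrite expr2 mulrDl mulrA.
have P0 : P = 0.
  apply/eqP; apply: contraTT xs_size => /max_poly_roots/(_ P_roots xs_uniq).
  by move=> /leq_trans/(_ (size_Poly _)); rewrite ltnS leqNgt.
have coef_eq0 i : nth 0 [:: q0; q1; q2] i = 0 by rewrite -coef_Poly -/P P0 coef0.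
by split; [exact: (coef_eq0 0%N) | exact: (coef_eq0 1%N) | exact: (coef_eq0 2%N)].
Qed.

(* In the identity at a point s, [a], [cs], [sn] stand for cos r, cos s, sin s,
   [f1], [f2], [df1], [df2], [h] for the values of f1, f2, f1', f2', h at s, and
   [c] for cos d_x(gamma s); both sides are rational functions of [c]. *)
Section Defect.
Variable R : numFieldType.
Variables (a cs sn f1 f2 df1 df2 h : R).

Definition defect_coef2 : R := sn * df1 + 3 * cs * f1 - 3 * cs * h / sn ^+ 3.
Definition defect_coef1 : R :=
  (cs - a) * f1 + sn * df2 + 2 * cs * f2 - (3 * cs - a) * h / sn ^+ 3.
Definition defect_coef0 : R := 2 * (cs - a) * (f2 - h / sn ^+ 3).

Definition defect (D : R) : R := defect_coef2 * D ^+ 2 + defect_coef1 * D + defect_coef0.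

Definition rhs_derive (c : R) : R :=
  let dc := (c * cs - a) / sn in
  df1 * sn ^+ 4 / (1 - c) + 4 * f1 * sn ^+ 3 * cs / (1 - c)
  + f1 * sn ^+ 4 * dc / (1 - c) ^+ 2 + df2 * sn ^+ 4 / (1 - c) ^+ 2
  + 4 * f2 * sn ^+ 3 * cs / (1 - c) ^+ 2 + 2 * f2 * sn ^+ 4 * dc / (1 - c) ^+ 3.

Definition lhs_value (c : R) : R :=
  h * ((3 * c ^+ 2 - 9 * c + 8) * (cs - a * c) / (1 - c) ^+ 3 - 3 * a).

Lemma rhs_derive_subr_lhs c : sn != 0 -> 1 - c != 0 ->
  rhs_derive c - lhs_value c = sn ^+ 3 / (1 - c) ^+ 3 * defect (1 - c).
Proof.
move=> sn0 c1; rewrite /rhs_derive /lhs_value /defect.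
by rewrite /defect_coef2 /defect_coef1 /defect_coef0; field; rewrite sn0 c1.
Qed.

Lemma defect_coefs_eq0P : sn != 0 -> cs != a ->
  [/\ defect_coef0 = 0, defect_coef1 = 0 & defect_coef2 = 0] <->
  [/\ h = f2 * sn ^+ 3, df1 = (- 3 * cs * f1 + 3 * cs * f2) / sn
    & df2 = ((a - cs) * f1 + (cs - a) * f2) / sn].
Proof.
move=> sn0 csa; rewrite /defect_coef0 /defect_coef1 /defect_coef2.
have sn30 : sn ^+ 3 != 0 by rewrite expf_neq0.
split=> [[/eqP c0 /eqP c1 /eqP c2] | [-> -> ->]]; last by split; field.
have hE : h = f2 * sn ^+ 3.
  move: c0; rewrite !mulf_eq0 pnatr_eq0 subr_eq0 (negbTE csa) /= subr_eq0 => /eqP->.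
  by rewrite divfK.
rewrite hE in c1 c2; split=> //.
- have e2 : sn * df1 = - 3 * cs * f1 + 3 * cs * f2.
    by apply/eqP; rewrite -subr_eq0 -(eqP c2); apply/eqP; field.
  by rewrite -e2 mulrAC divff // mul1r.
- have e1 : sn * df2 = (a - cs) * f1 + (cs - a) * f2.
    by apply/eqP; rewrite -subr_eq0 -(eqP c1); apply/eqP; field.
  by rewrite -e1 mulrAC divff // mul1r.
Qed.
End Defect.

Lemma is_derive_rhs (R : realType) (a b s : R) (f1 f2 : R -> R) :
  derivable f1 s 1 -> derivable f2 s 1 -> sin s != 0 ->
  1 - (a * cos s + b * sin s) != 0 ->
  is_derive s 1
    (fun u => f1 u * sin u ^+ 4 / (1 - (a * cos u + b * sin u))
            + f2 u * sin u ^+ 4 / (1 - (a * cos u + b * sin u)) ^+ 2)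
    (rhs_derive a (cos s) (sin s) (f1 s) (f2 s) (derive1 f1 s) (derive1 f2 s)
       (a * cos s + b * sin s)).
Proof.
move=> df1 df2 s0 D0; pose D := cst 1 - (a *: cos + b *: sin) : R -> R.
have hD : is_derive s 1 D (0 - (a *: - sin s + b *: cos s)) by typeclasses eauto.
have hDV := @is_deriveV _ D _ _ _ D0 hD.
have hD2V := @is_deriveV _ (D ^+ 2) _ _ _ (expf_neq0 2 D0) (is_deriveX 2 hD).
have hf1 : is_derive s 1 f1 (derive1 f1 s) by rewrite derive1E; exact: derivableP.
have hf2 : is_derive s 1 f2 (derive1 f2 s) by rewrite derive1E; exact: derivableP.
have H := is_deriveD (is_deriveM (is_deriveM hf1 (is_deriveX 4 (is_derive_sin s))) hDV)
  (is_deriveM (is_deriveM hf2 (is_deriveX 4 (is_derive_sin s))) hD2V).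
apply: (near_eq_is_derive _ (is_derive_eq H _)).
  by apply: filterE => u; rewrite /= !exprfctE.
(* the derivative of [a cos + b sin] at [s], written through its value there *)
have dc : ((a * cos s + b * sin s) * cos s - a) / sin s = - a * sin s + b * cos s.
  apply/(mulIf s0); rewrite divfK // -[RHS]addr0 -(mulr0 a) -(subrr 1).
  by rewrite -{1}(cos2Dsin2 s); ring.
rewrite /rhs_derive /GRing.scale /= !exprfctE /= dc.
rewrite (_ : D s = 1 - (a * cos s + b * sin s)) // (_ : (f1 * _) s = f1 s * sin s ^+ 4) //.
rewrite (_ : (f2 * _) s = f2 s * sin s ^+ 4) //.
by field; rewrite D0.
Qed.

Lemma phik6E (R : realType) (t : R) : 0 < t ->
  phik 6 t = (1 - cos t) ^+ 3 * (3 * cos t ^+ 2 + 9 * cos t + 8) / (15 * sin t ^+ 5).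
Proof. by move=> t0; rewrite /phik gt_eqF // -Ik6E // -mulf_div divff ?mul1r ?pnatr_eq0. Qed.

Section Gradient.
Variables (R : realType) (n : nat).
Implicit Types p q x : 'rV[R]_n.+1.

Lemma dotv_grad_dist p q x : on_sphere x ->
  dotv (grad_dist q x) (grad_dist p x) =
  (dotv p q - dotv p x * dotv q x) /
  (Num.sqrt (1 - dotv q x ^+ 2) * Num.sqrt (1 - dotv p x ^+ 2)).
Proof.
move=> hx; rewrite /grad_dist !(dotvBl, dotvBr, dotvZl, dotvZr) hx.
by rewrite (dotvC q p) (dotvC x p) invfM; ring.
Qed.

Lemma Psi6_dotv_grad_dist p q x (r c : R) :
  on_sphere p -> on_sphere q -> on_sphere x -> dotv p x = cos r -> 0 < sin r ->
  dotv x q = c -> c != 1 ->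
  - 15 * sin r * dotv (Psi 6 q x) (grad_dist p x) =
  (3 * c ^+ 2 - 9 * c + 8) * (dotv p q - cos r * c) / (1 - c) ^+ 3.
Proof.
move=> hp hq hx px sr0 xq c1; rewrite /Psi /Phi.
case: eqP => [xNq | xNq].
  (* at the antipode of q, Psi_q is 0 by convention and c = -1 *)
  have pq : dotv p q = - cos r by rewrite -px xNq dotvNr opprK.
  have c_N1 : c = -1 by rewrite -xq xNq dotvNl hq.
  by rewrite dotv0l pq c_N1; field.
have c_N1 : c != -1.
  by apply/eqP => c_N1; apply: xNq; apply: sphere_dotv_eqN1; rewrite ?xq.
have /andP[c_ge c_le] := sphere_dotv_bound hx hq; rewrite xq in c_ge c_le.
have c_gt : -1 < c by rewrite lt_neqAle eq_sym c_N1.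
have c_lt : c < 1 by rewrite lt_neqAle c1.
have Nqx : dotv (- q) x = - c by rewrite dotvNl dotvC xq.
have t_gt0 : 0 < gdist (- q) x by rewrite /gdist Nqx acos_gt0 //; apply/andP; split; lra.
have sin_t : sin (gdist (- q) x) = Num.sqrt (1 - c ^+ 2).
  by rewrite /gdist Nqx sin_acos ?sqrrN //; apply/andP; split; lra.
rewrite phik6E // sin_t cos_gdist //; last exact: on_sphereN.
rewrite Nqx dotvZl dotv_grad_dist // Nqx px dotvNr sqrrN -sin2cos2 sqrtr_sqr gtr0_norm //.
set S := Num.sqrt _; have S_gt0 : 0 < S by rewrite sqrtr_gt0; nra.
have S6 : S ^+ 6 = ((1 - c) * (1 + c)) ^+ 3.
  by rewrite (_ : 6 = 2 * 3)%N // exprM sqr_sqrtr; [congr (_ ^+ 3); ring | nra].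
transitivity ((1 + c) ^+ 3 * (3 * c ^+ 2 - 9 * c + 8) * (dotv p q - cos r * c) / S ^+ 6).
  by field; rewrite !gt_eqF.
by rewrite S6; field; apply/andP; split; rewrite gt_eqF //; lra.
Qed.
End Gradient.

Section BoundaryGeodesic.
Variables (R : realType) (n : nat) (p y : 'rV[R]_n.+1) (r : R) (gamma : R -> 'rV[R]_n.+1).
Hypothesis hp : on_sphere p.
Hypothesis hr : 0 < r < pi / 2.
Hypothesis hy : on_sphere y.
Hypothesis hpy : gdist p y = r.
Hypothesis hgs : forall s, r <= s <= pi -> on_sphere (gamma s).
Hypothesis hgr : gamma r = y.
Hypothesis hdist : forall s t, r <= s <= pi -> r <= t <= pi ->
  gdist (gamma s) (gamma t) = `|s - t|.
Hypothesis hdp : forall s, r <= s <= pi -> gdist p (gamma s) = s.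

Definition tangent_dir : 'rV[R]_n.+1 := (sin r)^-1 *: (y - cos r *: p).
Local Notation e := tangent_dir.

Definition boundary_rhs (f1 f2 : R -> R) (x : 'rV[R]_n.+1) (u : R) : R :=
  f1 u * sin u ^+ 4 / (1 - cos (gdist x (gamma u)))
  + f2 u * sin u ^+ 4 / (1 - cos (gdist x (gamma u))) ^+ 2.

Definition boundary_identity (f1 f2 h : R -> R) (x : 'rV[R]_n.+1) (s : R) : Prop :=
  is_derive s 1 (boundary_rhs f1 f2 x)
    (- 15 * sin r * dotv (Psi 6 (gamma s) x) (grad_dist p x) * h s - 3 * cos r * h s).

Definition ode_system (f1 f2 h : R -> R) (s : R) : Prop :=
  [/\ h s = f2 s * sin s ^+ 3,
      derive1 f1 s = (- 3 * cos s * f1 s + 3 * cos s * f2 s) / sin s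
    & derive1 f2 s = ((cos r - cos s) * f1 s + (cos s - cos r) * f2 s) / sin s].

Let oo_cc s : r < s < pi -> r <= s <= pi.
Proof. by case/andP => /ltW -> /ltW ->. Qed.

Lemma sin_r_gt0 : 0 < sin r.
Proof. exact: sin_gt0_pihalf. Qed.

Lemma r_lt_pi : r < pi.
Proof. by have := pi_gt0 R; case/andP: hr; lra. Qed.

Lemma dotv_p_y : dotv p y = cos r.
Proof. by rewrite -cos_gdist ?hpy. Qed.

Lemma dotv_p_tangent_dir : dotv p e = 0.
Proof. by rewrite dotvZr dotvBr dotvZr dotv_p_y hp mulr1 subrr mulr0. Qed.

Lemma dotv_y_tangent_dir : dotv y e = sin r.
Proof.
rewrite dotvZr dotvBr dotvZr hy (dotvC y p) dotv_p_y -expr2 -sin2cos2.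
by rewrite expr2 mulKf // gt_eqF // sin_r_gt0.
Qed.

Lemma on_sphere_tangent_dir : on_sphere e.
Proof.
rewrite /on_sphere {1}/tangent_dir dotvZl dotvBl dotvZl dotv_p_tangent_dir.
by rewrite dotv_y_tangent_dir mulr0 subr0 mulVf // gt_eqF // sin_r_gt0.
Qed.

Lemma gammaE u : r <= u <= pi -> gamma u = cos u *: p + sin u *: e.
Proof.
move=> hu; have hgu := hgs hu.
have gp : dotv (gamma u) p = cos u by rewrite dotvC -cos_gdist ?hdp.
have gy : dotv (gamma u) y = cos (u - r).
  have r_le : r <= r <= pi by rewrite lexx ltW ?r_lt_pi.
  by rewrite -cos_gdist // -hgr hdist // ger0_norm // subr_ge0; case/andP: hu.
have ge : dotv (gamma u) e = sin u.
  rewrite dotvZr dotvBr dotvZr gy gp cosB.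
  by rewrite (mulrC (cos r)) addrAC subrr add0r (mulrC (sin u)) mulKf // gt_eqF // sin_r_gt0.
rewrite -{1}gp -{1}ge; apply: sphere_orthonormal2 => //.
- exact: on_sphere_tangent_dir.
- exact: dotv_p_tangent_dir.
- by rewrite gp ge cos2Dsin2.
Qed.

Lemma sin_gt0_in s : r < s < pi -> 0 < sin s.
Proof. by case/andP: hr => r0 _ /andP[rs s_pi]; rewrite sin_gt0_pi // (lt_trans r0 rs). Qed.

Lemma cos_neq_cos_r s : r < s < pi -> cos s != cos r.
Proof.
case/andP: hr => r0 _ /andP[rs s_pi]; apply: contra_neq (negbT (gt_eqF rs)) => /cos_inj.
by apply; rewrite in_itv /= !ltW ?r_lt_pi // (lt_trans r0 rs).
Qed.

Section BoundaryPoint.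
Variable x : 'rV[R]_n.+1.
Hypotheses (hx : on_sphere x) (hxr : gdist p x = r).

Lemma boundary_dotv_p : dotv x p = cos r.
Proof. by rewrite dotvC -cos_gdist ?hxr. Qed.

Lemma boundary_dotv_gamma u : r <= u <= pi ->
  dotv x (gamma u) = cos r * cos u + dotv x e * sin u.
Proof.
by move=> hu; rewrite gammaE // dotvDr 2!dotvZr boundary_dotv_p (mulrC (cos u)) (mulrC (sin u)).
Qed.

Lemma boundary_dotv_gamma_neq1 s : r < s < pi -> dotv x (gamma s) != 1.
Proof.
move=> hs; apply/eqP => /(sphere_dotv_eq1 hx (hgs (oo_cc hs))) x_gs.
have := hdp (oo_cc hs); rewrite -x_gs hxr => rs.
by move: hs; rewrite -rs ltxx.
Qed.

Lemma boundary_lhs s (H : R) : r < s < pi ->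
  - 15 * sin r * dotv (Psi 6 (gamma s) x) (grad_dist p x) * H - 3 * cos r * H =
  lhs_value (cos r) (cos s) H (dotv x (gamma s)).
Proof.
move=> hs; rewrite (Psi6_dotv_grad_dist hp (hgs (oo_cc hs)) hx _ sin_r_gt0 erefl).
- have ps : dotv p (gamma s) = cos s by rewrite -cos_gdist ?hdp ?oo_cc //; apply/hgs/oo_cc.
  by rewrite ps /lhs_value; ring.
- by rewrite dotvC boundary_dotv_p.
- exact: boundary_dotv_gamma_neq1.
Qed.

Lemma is_derive_boundary_rhs s (f1 f2 : R -> R) : r < s < pi ->
  derivable f1 s 1 -> derivable f2 s 1 ->
  is_derive s 1 (boundary_rhs f1 f2 x)
    (rhs_derive (cos r) (cos s) (sin s) (f1 s) (f2 s) (derive1 f1 s) (derive1 f2 s)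
       (dotv x (gamma s))).
Proof.
move=> hs d1 d2; rewrite boundary_dotv_gamma ?oo_cc //.
apply: near_eq_is_derive (is_derive_rhs d1 d2 _ _).
- have : s \in `]r, pi[ by rewrite in_itv.
  move=> /near_in_itvoo; apply: filterS => u; rewrite in_itv => /oo_cc hu.
  by rewrite /boundary_rhs cos_gdist ?boundary_dotv_gamma //; apply: hgs.
- by rewrite gt_eqF // sin_gt0_in.
- by rewrite subr_eq0 eq_sym -boundary_dotv_gamma ?oo_cc // boundary_dotv_gamma_neq1.
Qed.

Lemma boundary_identity_iff_defect s (f1 f2 h : R -> R) : r < s < pi ->
  derivable f1 s 1 -> derivable f2 s 1 ->
  boundary_identity f1 f2 h x s <->
  defect (cos r) (cos s) (sin s) (f1 s) (f2 s) (derive1 f1 s) (derive1 f2 s) (h s)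
    (1 - dotv x (gamma s)) = 0.
Proof.
move=> hs d1 d2; have hF := is_derive_boundary_rhs hs d1 d2.
have sn0 : sin s != 0 by rewrite gt_eqF // sin_gt0_in.
have c1 : 1 - dotv x (gamma s) != 0.
  by rewrite subr_eq0 eq_sym boundary_dotv_gamma_neq1.
rewrite /boundary_identity boundary_lhs //; split=> [hL | hD].
  have /eqP : rhs_derive (cos r) (cos s) (sin s) (f1 s) (f2 s) (derive1 f1 s) (derive1 f2 s)
      (dotv x (gamma s)) - lhs_value (cos r) (cos s) (h s) (dotv x (gamma s)) = 0.
    by rewrite -(derive_val (is_derive := hF)) (derive_val (is_derive := hL)) subrr.
  rewrite rhs_derive_subr_lhs // mulf_eq0 => /orP[|/eqP //].
  by rewrite mulf_eq0 invr_eq0 !expf_eq0 /= (negbTE sn0) (negbTE c1).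
by apply: is_derive_eq hF _; apply/eqP; rewrite -subr_eq0 rhs_derive_subr_lhs // hD mulr0.
Qed.

End BoundaryPoint.

Lemma exists_boundary_point (al : R) : (2 <= n)%N -> -1 <= al <= 1 -> al != 1 ->
  exists2 x, [/\ on_sphere x, gdist p x = r & x <> y] &
    forall s, r <= s <= pi -> dotv x (gamma s) = cos r * cos s + sin r * al * sin s.
Proof.
move=> n2 al_bound al1.
have [|x [hx xp xe]] := exists_sphere_dotv2 (a := cos r) (b := sin r * al) n2 hp
  on_sphere_tangent_dir dotv_p_tangent_dir.
  rewrite exprMn -[X in _ <= X](cos2Dsin2 r) lerD2l ler_piMr ?sqr_ge0 //.
  by case/andP: al_bound; nra.
have hxr : gdist p x = r.
  by rewrite /gdist dotvC xp cosK // in_itv /= !ltW ?r_lt_pi //; case/andP: hr.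
exists x => [|s hs]; last by rewrite boundary_dotv_gamma // xe.
split=> // xy.
have : sin r * (1 - al) = 0 by rewrite mulrBr mulr1 -xe xy dotv_y_tangent_dir subrr.
by apply/eqP; rewrite mulf_eq0 subr_eq0 [1 == al]eq_sym (negbTE al1) orbF gt_eqF // sin_r_gt0.
Qed.

Lemma boundary_identity_ode s (f1 f2 h : R -> R) : (2 <= n)%N -> r < s < pi ->
  derivable f1 s 1 -> derivable f2 s 1 ->
  (forall x, on_sphere x -> gdist p x = r -> x <> y -> boundary_identity f1 f2 h x s) ->
  ode_system f1 f2 h s.
Proof.
move=> n2 hs d1 d2 identity.
have sn0 : sin s != 0 by rewrite gt_eqF // sin_gt0_in.
apply/(defect_coefs_eq0P _ _ _ _ _ sn0 (cos_neq_cos_r hs)).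
pose D al := 1 - (cos r * cos s + sin r * al * sin s).
have D_inj : injective D.
  move=> al be /eqP; rewrite -subr_eq0 /D (_ : _ - _ = sin r * sin s * (be - al)).
    by rewrite !mulf_eq0 gt_eqF ?sin_r_gt0 // (negbTE sn0) subr_eq0 => /eqP.
  by ring.
apply: (quadratic_coefs_eq0 (xs := map D [:: -1; 0; 2^-1])).
- by rewrite map_inj_uniq //= !inE; lra.
- by [].
- move=> _ /mapP[al al_in ->].
  have /andP[al_bound al1] : (-1 <= al <= 1) && (al != 1).
    by move: al_in; rewrite !inE => /or3P[] /eqP ->; apply/andP; split; lra.
  have [x [hx hxr hxy] hxg] := exists_boundary_point n2 al_bound al1.
  rewrite /D -hxg ?oo_cc //; apply/boundary_identity_iff_defect => //.
  exact: identity.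
Qed.

Lemma ode_boundary_identity s (f1 f2 h : R -> R) : r < s < pi ->
  derivable f1 s 1 -> derivable f2 s 1 -> ode_system f1 f2 h s ->
  forall x, on_sphere x -> gdist p x = r -> boundary_identity f1 f2 h x s.
Proof.
move=> hs d1 d2 ode x hx hxr; apply/boundary_identity_iff_defect => //.
have sn0 : sin s != 0 by rewrite gt_eqF // sin_gt0_in.
have [c0 c1 c2] := (defect_coefs_eq0P _ _ _ _ _ sn0 (cos_neq_cos_r hs)).2 ode.
by rewrite /defect c0 c1 c2 !mul0r !addr0.
Qed.

End BoundaryGeodesic.

Unset Implicit Arguments.

Theorem lemma3p3 (R : realType) (n : nat) (p y : 'rV[R]_n.+1) (r : R)
  (gamma : R -> 'rV[R]_n.+1) (h f1 f2 : R -> R) :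
  (2 <= n)%N ->
  on_sphere p ->
  0 < r < pi / 2 ->
  on_sphere y -> gdist p y = r ->
  (* gamma : [r, pi] -> S^n is the unit-speed minimizing geodesic from y to -p *)
  (forall s, r <= s <= pi -> on_sphere (gamma s)) ->
  gamma r = y -> gamma pi = - p ->
  (forall s t, r <= s <= pi -> r <= t <= pi ->
     gdist (gamma s) (gamma t) = `|s - t|) ->
  (forall s, r <= s <= pi -> gdist p (gamma s) = s) ->
  smooth_on r pi h -> smooth_on r pi f1 -> smooth_on r pi f2 ->
  (forall x s, on_sphere x -> gdist p x = r -> x <> y -> r < s < pi ->
     is_derive s (1 : R)
       (fun u => f1 u * sin u ^+ 4 / (1 - cos (gdist x (gamma u)))
               + f2 u * sin u ^+ 4 / (1 - cos (gdist x (gamma u))) ^+ 2)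
       (- 15 * sin r * dotv (Psi 6 (gamma s) x) (grad_dist p x) * h s
        - 3 * cos r * h s))
  <->
  (forall s, r < s < pi ->
     [/\ h s = f2 s * sin s ^+ 3,
         derive1 f1 s = (- 3 * cos s * f1 s + 3 * cos s * f2 s) / sin s
       & derive1 f2 s = ((cos r - cos s) * f1 s + (cos s - cos r) * f2 s) / sin s]).
Proof.
move=> n2 hp hr hy hpy hgs hgr _ hdist hdp _ sf1 sf2.
split=> [identity s hs | ode x s hx hxr _ hs].
- apply: (boundary_identity_ode hp hr hy hpy hgs hgr hdist hdp n2 hs
    (sf1 0%N s hs) (sf2 0%N s hs)) => x hx hxr hxy.
  exact: identity.
- exact: (ode_boundary_identity hp hr hy hpy hgs hgr hdist hdp hs
    (sf1 0%N s hs) (sf2 0%N s hs) (ode s hs) hx hxr).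
Qed.
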